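(* Let $G$ be a simple graph with $n$ vertices and $m$ edges, where $n$ is odd and $m \ge n-1 \ge 3$. Then $$\mathrm{HE}(G) \le \begin{cases} \dfrac{2m}{n-1} + \dfrac{\sqrt{2mn(n^2-3n+1)(n^2-n-2m)}}{n(n-1)}, & \text{if } m \le \dfrac{n^2(n-3)^2}{2(n^2-4n+11)},\\[2ex] \dfrac{1}{n}\sqrt{2m(2n-1)(n^2-2m)}, & \text{otherwise.}\end{cases}$$
   Context: All graphs are finite, simple and undirected. For a graph $G$ on $n$ vertices with adjacency matrix $A$, let $\lambda_1 \ge \lambda_2 \ge \cdots \ge \lambda_n$ be the eigenvalues of $A$ and $r := \lfloor n/2 \rfloor$. The Hückel energy of $G$ is $\mathrm{HE}(G) = 2\sum_{i=1}^{r}\lambda_i$ if $n=2r$, and $\mathrm{HE}(G) = 2\sum_{i=1}^{r}\lambda_i + \lambda_{r+1}$ if $n=2r+1$. *)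

From HB Require Import structures.
From mathcomp Require Import all_boot all_order all_algebra.
From mathcomp Require Import reals.
Set Implicit Arguments. Unset Strict Implicit. Unset Printing Implicit Defensive.
Import Order.TTheory GRing.Theory Num.Theory.
Local Open Scope ring_scope.

Definition simple_graph (n : nat) (e : rel 'I_n) : Prop :=
  (forall i, ~~ e i i) /\ (forall i j, e i j = e j i).

Definition num_edges (n : nat) (e : rel 'I_n) : nat :=
  #|[set p : 'I_n * 'I_n | (p.1 < p.2)%N && e p.1 p.2]|.

Definition adjmx (R : realType) (n : nat) (e : rel 'I_n) : 'M[R]_n :=
  \matrix_(i, j) (e i j)%:R.

(* s is the list of eigenvalues of A, with multiplicity, in nonincreasing
   order: lambda_1 >= ... >= lambda_n are s`_0, ..., s`_(n-1). *)
Definition is_spectrum (R : realType) (n : nat) (A : 'M[R]_n) (s : seq R) : Prop :=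
  size s = n /\ sorted (fun x y => y <= x) s /\
  char_poly A = \prod_(x <- s) ('X - x%:P).

Definition huckel_energy (R : realType) (n : nat) (s : seq R) : R :=
  2 * (\sum_(i < n./2) s`_i) + (if odd n then s`_(n./2) else 0).

From HB Require Import structures.
From mathcomp Require Import all_boot all_order all_algebra.
From mathcomp Require Import reals.
From mathcomp Require Import complex mxred sesquilinear spectral.
From mathcomp Require Import ring lra zify.
Set Implicit Arguments. Unset Strict Implicit. Unset Printing Implicit Defensive.
Import Order.TTheory GRing.Theory Num.Theory.
Local Open Scope ring_scope.

(* Write n = 2r + 1 and let t_0 >= ... >= t_2r be the eigenvalues of the adjacency matrix.
   Then sum t_i = tr A = 0, sum t_i^2 = tr A^2 = 2m, and the Rayleigh quotient of the
   all-ones vector gives t_0 >= 2m / n.  Expanding a sum of squares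
   sum_(i >= 1) (eps * w_i - t_i - t_0 / (n - 1))^2 >= 0 with well-chosen weights yields,
   for every eps, a quadratic inequality in eps; its discriminant bounds HE by
   n t_0 / (n - 1) + sqrt(c (2m - n t_0^2 / (n - 1))), c = (n^2 - 3n + 1) / (n - 1).
   When m >= n - 1 this is decreasing in t_0 >= 2m / n, and t_0 = 2m / n gives the first
   bound.  The second bound dominates the first one as soon as 2m <= n(n - 1), so the
   case distinction of the statement plays no role in the proof. *)

Section QuadraticBounds.
Variable R : rcfType.
Implicit Types x p q u w z : R.

Lemma sqrtr_le_sqr z w : 0 <= w -> z <= w ^+ 2 -> Num.sqrt z <= w.
Proof. by move=> w0 zw; rewrite -(ger0_norm w0) -sqrtr_sqr ler_wsqrtr. Qed.

Lemma sqr_le_sqrtr x z : x ^+ 2 <= z -> x <= Num.sqrt z.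
Proof.
have [x0 _|x0 xz] := lerP x 0; first exact: le_trans x0 (sqrtr_ge0 _).
by rewrite -(gtr0_norm x0) -sqrtr_sqr ler_wsqrtr.
Qed.

Lemma le_sqrt_of_quadratic x p q : 0 < p ->
  (forall eps, 2 * eps * x <= eps ^+ 2 * p + q) -> x <= Num.sqrt (p * q).
Proof.
move=> p0 quad; apply: sqr_le_sqrtr.
have := quad (x / p); rewrite -subr_ge0.
have -> : (x / p) ^+ 2 * p + q - 2 * (x / p) * x = (p * q - x ^+ 2) / p.
  by field; rewrite gt_eqF.
by rewrite pmulr_lge0 ?invr_gt0 // subr_ge0.
Qed.

Lemma sum_sqr_block (m k : nat) (F : nat -> R) (c : R) :
  0 <= (k - m)%:R * c ^+ 2 - 2 * c * \sum_(m <= i < k) F i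
       + \sum_(m <= i < k) F i ^+ 2.
Proof.
have <- : \sum_(m <= i < k) (c - F i) ^+ 2 = (k - m)%:R * c ^+ 2
    - 2 * c * \sum_(m <= i < k) F i + \sum_(m <= i < k) F i ^+ 2.
  rewrite (eq_bigr (fun i => c ^+ 2 - 2 * c * F i + F i ^+ 2)); last by move=> i _; ring.
  by rewrite big_split /= sumrB sumr_const_nat -mulr_sumr [in RHS]mulr_natl.
by rewrite sumr_ge0 // => i _; exact: sqr_ge0.
Qed.

Lemma sum_split_at (r : nat) (F : nat -> R) : (1 <= r)%N ->
  \sum_(0 <= i < (2 * r).+1) F i =
  F 0%N + \sum_(1 <= i < r) F i + F r + \sum_(r.+1 <= i < (2 * r).+1) F i.
Proof.
move=> r1; rewrite big_ltn // (big_cat_nat _ (n := r)) //=; last by lia.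
by rewrite (big_cat_nat _ (m := r) (n := r.+1)) ?big_nat1 ?addrA //; lia.
Qed.

Lemma huckel_quadratic (r : nat) (t : nat -> R) (u : R) : (1 <= r)%N ->
  \sum_(0 <= i < (2 * r).+1) t i = 0 ->
  \sum_(0 <= i < (2 * r).+1) t i ^+ 2 = u ->
  let n : R := ((2 * r).+1)%:R in
  forall eps, 2 * eps * (2 * \sum_(0 <= i < r) t i + t r - n / (n - 1) * t 0%N)
    <= eps ^+ 2 * ((n ^+ 2 - 3 * n + 1) / (n - 1)) + (u - n * t 0%N ^+ 2 / (n - 1)).
Proof.
move=> r1; rewrite !sum_split_at //.
set a := t 0%N; set P1 := \sum_(1 <= i < r) t i; set Q1 := \sum_(1 <= i < r) t i ^+ 2.
set P3 := \sum_(r.+1 <= i < _) t i; set Q3 := \sum_(r.+1 <= i < _) t i ^+ 2.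
move=> sum0 sum2 n eps.
have nE : n = 2 * r%:R + 1 by rewrite /n -addn1 natrD natrM.
(* The inequality is [sum_(1 <= i <= 2r) (eps * w_i - b - t i)^2 >= 0] for the weights
   [w = 2 - k] on [[1, r)], [1 - k] at [r] and [- k] on [(r, 2r]], which sum to zero. *)
set k := (n - 2) / (n - 1); set b := a / (n - 1).
have block1 := sum_sqr_block 1 r t (eps * (2 - k) - b).
have block3 := sum_sqr_block r.+1 (2 * r).+1 t (eps * (- k) - b).
have middle := sqr_ge0 (eps * (1 - k) - b - t r).
rewrite -/P1 -/Q1 natrB // in block1.
rewrite -/P3 -/Q3 (_ : (_ - _)%N = r) in block3; last by lia.
have r0 : r%:R != 0 :> R by rewrite pnatr_eq0 -lt0n.
rewrite big_ltn // -/a -/P1 -subr_ge0.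
have P3E : P3 = - (a + P1 + t r) by lra.
have uE : u = a ^+ 2 + Q1 + t r ^+ 2 + Q3 by rewrite -sum2.
set c1 := eps * (2 - k) - b in block1; set c3 := eps * - k - b in block3.
set rhs := (X in 0 <= X - _); set lhs := (X in 0 <= _ - X).
have -> : rhs - lhs = ((r%:R - 1) * c1 ^+ 2 - 2 * c1 * P1 + Q1)
    + (eps * (1 - k) - b - t r) ^+ 2 + (r%:R * c3 ^+ 2 - 2 * c3 * P3 + Q3).
  by rewrite /rhs /lhs /c1 /c3 P3E uE /k /b nE; field; rewrite addrK mulf_neq0 // pnatr_eq0.
lra.
Qed.

Definition energy_bound_sparse (n u : R) : R :=
  u / (n - 1) + Num.sqrt (u * n * (n ^+ 2 - 3 * n + 1) * (n ^+ 2 - n - u)) / (n * (n - 1)).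

Definition energy_bound_dense (n u : R) : R :=
  n^-1 * Num.sqrt (u * (2 * n - 1) * (n ^+ 2 - u)).

(* The left-hand side decreases in [a] on [a >= u / n], where it equals the bound. *)
Lemma energy_bound_sparse_max (n u a : R) :
  4 <= n -> 2 * (n - 1) <= u -> u <= n * (n - 1) -> u <= n * a ->
  0 <= u - n * a ^+ 2 / (n - 1) ->
  n / (n - 1) * a + Num.sqrt ((n ^+ 2 - 3 * n + 1) / (n - 1) * (u - n * a ^+ 2 / (n - 1)))
    <= energy_bound_sparse n u.
Proof.
move=> n4 u_lo u_hi u_a Y0.
have N0 : 0 < n - 1 by lra.
have n0 : 0 < n by lra.
set c := (n ^+ 2 - 3 * n + 1) / (n - 1).
have c0 : 0 < c by rewrite divr_gt0 //; nra.
set d := u / n; set dlt := n / (n - 1) * (a - d).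
set S := Num.sqrt (u * n * (n ^+ 2 - 3 * n + 1) * (n ^+ 2 - n - u)) / (n * (n - 1)).
have d0 : 0 < d by rewrite divr_gt0 //; lra.
have da : d <= a by rewrite /d ler_pdivrMr // mulrC.
have dlt0 : 0 <= dlt by rewrite mulr_ge0 ?divr_ge0 ?subr_ge0 //; lra.
have S0 : 0 <= S by rewrite divr_ge0 ?sqrtr_ge0 // mulr_ge0 //; lra.
have S2 : S ^+ 2 = c * (u - n * d ^+ 2 / (n - 1)).
  rewrite expr_div_n sqr_sqrtr; last first.
    by rewrite -mulrA mulr_ge0 ?mulr_ge0 //; nra.
  by rewrite /c /d; field; rewrite !gt_eqF.
have Scd : S <= c * d.
  have : S ^+ 2 <= (c * d) ^+ 2.
    rewrite S2 -subr_ge0.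
    have -> : (c * d) ^+ 2 - c * (u - n * d ^+ 2 / (n - 1)) =
      c * u * (u * (n - 1) - n ^+ 2) / n ^+ 2.
      by rewrite /c /d; field; rewrite !gt_eqF.
    have uN2 : 0 <= u * (n - 1) - n ^+ 2 by nra.
    by rewrite divr_ge0 ?exprn_ge0 ?(ltW n0) // mulr_ge0 // (mulr_ge0 (ltW c0)) //; lra.
  have cd0 : 0 <= c * d by rewrite mulr_ge0 //; lra.
  nra.
have cY : c * (u - n * a ^+ 2 / (n - 1)) = S ^+ 2 - dlt * (c * (a + d)).
  by rewrite S2 /dlt /d; field; rewrite !gt_eqF.
have K2S : 2 * S <= c * (a + d) by nra.
have -> : energy_bound_sparse n u = n / (n - 1) * d + S.
  by rewrite /energy_bound_sparse /d; congr (_ + _); field; rewrite !gt_eqF.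
have -> : n / (n - 1) * a = n / (n - 1) * d + dlt by rewrite /dlt; ring.
suff : Num.sqrt (c * (u - n * a ^+ 2 / (n - 1))) <= S - dlt by lra.
have K0 : 0 < c * (a + d) by rewrite mulr_gt0 //; lra.
by apply: sqrtr_le_sqr; [nra | rewrite cY; nra].
Qed.

Lemma energy_bound_sparse_le_dense (n u : R) : 3 <= n -> 0 <= u -> u <= n * (n - 1) ->
  energy_bound_sparse n u <= energy_bound_dense n u.
Proof.
move=> n3 u0 u_hi.
have N0 : 0 < n - 1 by lra.
have n0 : 0 < n by lra.
set c := n ^+ 2 - 3 * n + 1.
have c0 : 0 < c by rewrite /c; nra.
set x := u / (n - 1).
set S := Num.sqrt (u * n * c * (n ^+ 2 - n - u)) / (n * (n - 1)).
have S0 : 0 <= S by rewrite divr_ge0 ?sqrtr_ge0 // mulr_ge0 //; lra.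
have S2 : S ^+ 2 = c * u * (n * (n - 1) - u) / (n * (n - 1) ^+ 2).
  rewrite expr_div_n sqr_sqrtr; last by rewrite mulr_ge0 ?mulr_ge0 //; lra.
  by field; rewrite !gt_eqF.
set Z := u * (2 * n - 1) * (n ^+ 2 - u).
(* With this weight, [(x + S)^2 <= (1 + w) x^2 + (1 + 1/w) S^2] is exactly the dense bound. *)
set w := c / n ^+ 2.
have w0 : 0 < w by rewrite divr_gt0 // exprn_gt0.
have amgm : 2 * x * S <= w * x ^+ 2 + S ^+ 2 / w.
  have : 0 <= (w * x - S) ^+ 2 / w by rewrite divr_ge0 ?sqr_ge0 // ltW.
  have -> : (w * x - S) ^+ 2 / w = w * x ^+ 2 + S ^+ 2 / w - 2 * x * S.
    by field; rewrite gt_eqF.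
  lra.
have sumZ : (1 + w) * x ^+ 2 + (1 + w^-1) * S ^+ 2 = Z / n ^+ 2.
  by rewrite S2 /w /x /Z /c; field; rewrite !gt_eqF //; nra.
rewrite /energy_bound_sparse /energy_bound_dense -/c -/x -/S -/Z.
rewrite -[n^-1]ger0_norm ?invr_ge0 ?(ltW n0) // -sqrtr_sqr -sqrtrM ?sqr_ge0 //.
apply: sqr_le_sqrtr; rewrite exprVn mulrC -sumZ.
have -> : (1 + w) * x ^+ 2 + (1 + w^-1) * S ^+ 2 =
  x ^+ 2 + (w * x ^+ 2 + S ^+ 2 / w) + S ^+ 2 by field; rewrite gt_eqF.
lra.
Qed.

Lemma huckel_sum_le_sparse (r : nat) (t : nat -> R) (u : R) : (2 <= r)%N ->
  \sum_(0 <= i < (2 * r).+1) t i = 0 ->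
  \sum_(0 <= i < (2 * r).+1) t i ^+ 2 = u ->
  let n : R := ((2 * r).+1)%:R in
  2 * (n - 1) <= u -> u <= n * (n - 1) -> u <= n * t 0%N ->
  2 * \sum_(0 <= i < r) t i + t r <= energy_bound_sparse n u.
Proof.
move=> r2 sum0 sum2 n u_lo u_hi u_t0.
have quad := huckel_quadratic (ltnW r2) sum0 sum2; rewrite -/n in quad.
have n4 : 4 <= n by rewrite /n (ler_nat R 4); lia.
have Y0 : 0 <= u - n * t 0%N ^+ 2 / (n - 1).
  by have := quad 0; rewrite !mulr0 expr0n !mul0r add0r.
apply: le_trans (energy_bound_sparse_max n4 u_lo u_hi u_t0 Y0).
rewrite -[_ + t r](subrK (n / (n - 1) * t 0%N)) addrC lerD2l.
by apply: le_sqrt_of_quadratic quad; rewrite divr_gt0 //; nra.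
Qed.

End QuadraticBounds.

Lemma char_poly_conj (F : fieldType) (n : nat) (P B : 'M[F]_n) : P \in unitmx ->
  char_poly (invmx P *m B *m P) = char_poly B.
Proof.
move=> Pu; rewrite /char_poly /char_poly_mx.
set Q := map_mx (@polyC F) P; set Qi := map_mx (@polyC F) (invmx P).
have QiQ : Qi *m Q = 1%:M by rewrite -map_mxM mulVmx // map_mx1.
have -> : 'X%:M - map_mx (@polyC F) (invmx P *m B *m P) =
   Qi *m ('X%:M - map_mx (@polyC F) B) *m Q.
  by rewrite !map_mxM mulmxBr mulmxBl mul_mx_scalar -scalemxAl QiQ scalemx1.
by rewrite !det_mulmx mulrAC -det_mulmx QiQ det1 mul1r.
Qed.

Lemma mxtrace_conj (F : fieldType) (n : nat) (P B : 'M[F]_n) : P \in unitmx ->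
  \tr (invmx P *m B *m P) = \tr B.
Proof. by move=> Pu; rewrite mxtrace_mulC mulmxA mulmxV // mul1mx. Qed.

Lemma trmxC_map_real (R : rcfType) (k l : nat) (B : 'M[R]_(k, l)) :
  ((map_mx (real_complex R) B) ^t*)%sesqui = (map_mx (real_complex R) B)^T.
Proof. by apply/matrixP => i j; rewrite !mxE conj_Creal ?complex_real. Qed.

Section RealSymmetricSpectrum.
Local Open Scope sesquilinear_scope.
Variables (R : rcfType) (n : nat) (A : 'M[R]_n) (s : seq R).
Hypotheses (symA : A^T = A) (charA : char_poly A = \prod_(x <- s) ('X - x%:P)).
Local Notation toC := (real_complex R).

Let Ac := map_mx toC A.
Let P := spectralmx Ac.
Let D := spectral_diag Ac.

Let P_unit : P \in unitmx. Proof. exact: spectral_unit. Qed.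

Let Ac_spectral : Ac = invmx P *m diag_mx D *m P.
Proof.
apply/orthomx_spectralP/normalmxP.
by rewrite trmxC_map_real map_trmx symA.
Qed.

Let spectral_diag_perm : perm_eq (map toC s) [seq D 0 i | i <- enum 'I_n].
Proof.
apply: prod_XsubC_eq; rewrite big_map.
rewrite (eq_bigr (fun x => map_poly toC ('X - x%:P))) => [|x _]; last first.
  by rewrite map_polyXsubC.
rewrite -rmorph_prod -charA [LHS](_ : _ = map_poly toC (char_poly A)) //.
rewrite map_char_poly -/Ac Ac_spectral char_poly_conj //.
rewrite char_poly_trig ?diag_mx_is_trig // big_map big_enum /=.
by apply: eq_bigr => i _; rewrite mxE eqxx mulr1n.
Qed.

Let sum_spectral_diag (g : complex R -> complex R) :
  \sum_(x <- map toC s) g x = \sum_i g (D 0 i).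
Proof. by rewrite (perm_big _ spectral_diag_perm) big_map big_enum. Qed.

Let mxtrace_map_real (B : 'M[R]_n) : \tr (map_mx toC B) = toC (\tr B).
Proof. by rewrite /mxtrace rmorph_sum; apply: eq_bigr => i _; rewrite mxE. Qed.

Lemma sum_eigen : \sum_(x <- s) x = \tr A.
Proof.
apply: complexI; rewrite -[_%:C%C]/(toC _) rmorph_sum -mxtrace_map_real.
rewrite -(big_map toC predT id) sum_spectral_diag.
by rewrite -/Ac Ac_spectral mxtrace_conj // mxtrace_diag.
Qed.

Lemma sum_eigen_sqr : \sum_(x <- s) x ^+ 2 = \tr (A *m A).
Proof.
apply: complexI; rewrite -[_%:C%C]/(toC _) rmorph_sum -mxtrace_map_real map_mxM -/Ac.
under eq_bigr do rewrite rmorphXn.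
rewrite -(big_map toC predT (fun x => x ^+ 2)) sum_spectral_diag.
rewrite Ac_spectral !mulmxA mulmxK // -(mulmxA (invmx P)) mulmx_diag mxtrace_conj //.
by rewrite mxtrace_diag; apply: eq_bigr => i _; rewrite mxE expr2.
Qed.

Lemma rayleigh_le (M : R) : {in s, forall x, x <= M} ->
  forall v : 'rV[R]_n, (v *m A *m v^T) 0 0 <= M * (v *m v^T) 0 0.
Proof.
move=> leM v; set vc := map_mx toC v.
have leD j : D 0 j <= toC M.
  have : D 0 j \in [seq D 0 i | i <- enum 'I_n] by apply: map_f; rewrite mem_enum.
  by rewrite -(perm_mem spectral_diag_perm) => /mapP [x xs ->]; rewrite lecR leM.
have PtP : P ^t* *m P = 1%:M by rewrite -invmx_unitary ?mulVmx ?spectral_unitarymx.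
set z := vc *m P ^t*.
have zE : z ^t* = P *m vc^T by rewrite trmx_mul map_mxM trmxCK trmxC_map_real.
have quadA : toC ((v *m A *m v^T) 0 0) = (z *m diag_mx D *m z ^t*) 0 0.
  rewrite zE /z -invmx_unitary ?spectral_unitarymx //.
  have -> : vc *m invmx P *m diag_mx D *m (P *m vc^T) = vc *m Ac *m vc^T.
    by rewrite Ac_spectral !mulmxA.
  have : map_mx toC (v *m A *m v^T) = vc *m Ac *m vc^T by rewrite !map_mxM map_trmx.
  by move/matrixP/(_ 0 0); rewrite mxE.
have quad1 : toC ((v *m v^T) 0 0) = (z *m z ^t*) 0 0.
  rewrite zE /z -mulmxA (mulmxA (P ^t*)) PtP mul1mx.
  have : map_mx toC (v *m v^T) = vc *m vc^T by rewrite map_mxM map_trmx.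
  by move/matrixP/(_ 0 0); rewrite mxE.
rewrite -lecR -[(_ * _)%:C%C]/(toC (_ * _)) quadA rmorphM /= quad1.
rewrite !mxE mulr_sumr; apply: ler_sum => j _.
rewrite mul_mx_diag !mxE; set w := (\sum_(k < n) _).
by rewrite mulrAC [_ * (w * _)]mulrC ler_wpM2l ?mul_conjC_ge0.
Qed.

End RealSymmetricSpectrum.

Lemma dot_const_mx1 (R : pzRingType) (n : nat) :
  ((const_mx 1 : 'rV[R]_n) *m (const_mx 1 : 'rV[R]_n)^T) 0 0 = n%:R.
Proof.
rewrite mxE (eq_bigr (fun _ => 1)) ?sumr_const ?card_ord // => i _.
by rewrite !mxE mulr1.
Qed.

Lemma sorted_ge_head (R : numDomainType) (s : seq R) :
  sorted (fun x y => y <= x) s -> {in s, forall x, x <= s`_0}.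
Proof.
move=> ss x xs; rewrite -(nth_index 0 xs).
have tr : transitive (fun x y : R => y <= x) by move=> a b c /= ba cb; exact: le_trans cb ba.
apply: (sorted_leq_nth tr _ 0 ss) => //; last by rewrite inE index_mem.
by rewrite inE; case: (s) xs.
Qed.

Section SimpleGraph.
Variables (n : nat) (e : rel 'I_n).
Hypothesis simple_e : simple_graph e.

Lemma sum_adj_eq_twice_edges : (\sum_i \sum_j (e i j : nat) = 2 * num_edges e)%N.
Proof.
have [irr sym] := simple_e.
rewrite pair_big /=.
have -> : (\sum_(p : 'I_n * 'I_n) (e p.1 p.2 : nat) =
   \sum_(p : 'I_n * 'I_n) (((p.1 < p.2)%N && e p.1 p.2) : nat) +
   \sum_(p : 'I_n * 'I_n) (((p.2 < p.1)%N && e p.1 p.2) : nat))%N.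
  rewrite -big_split /=; apply: eq_bigr => -[i j] _ /=.
  case: (ltngtP i j) => ij; rewrite /= ?addn0 ?add0n //.
  by rewrite (val_inj ij) (negbTE (irr j)).
have -> : (\sum_(p : 'I_n * 'I_n) (((p.2 < p.1)%N && e p.1 p.2) : nat) =
   \sum_(p : 'I_n * 'I_n) (((p.1 < p.2)%N && e p.1 p.2) : nat))%N.
  rewrite (reindex_inj (h := fun p : 'I_n * 'I_n => (p.2, p.1))) /=.
    by apply: eq_bigr => -[i j] _ /=; rewrite sym.
  by move=> [a b] [c d] /= [-> ->].
rewrite addnn -mul2n /num_edges -sum1_card [in RHS]big_mkcond /=.
by congr (2 * _)%N; apply: eq_bigr => p _; rewrite inE; case: (_ && _).
Qed.

Lemma twice_edges_le : (2 * num_edges e <= n * n.-1)%N.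
Proof.
rewrite -sum_adj_eq_twice_edges -[X in (X * _)%N]card_ord -sum_nat_const.
apply: leq_sum => i _; rewrite (bigD1 i) //= (negbTE (simple_e.1 i)) add0n.
apply: (@leq_trans (\sum_(j | j != i) 1)%N); first by apply: leq_sum => j _; exact: leq_b1.
by rewrite sum1_card cardC1 card_ord.
Qed.

Variable R : realType.
Local Notation A := (adjmx R e).
Local Notation ones := (const_mx 1 : 'rV[R]_n).

Lemma adjmx_sym : A^T = A.
Proof. by apply/matrixP => i j; rewrite !mxE simple_e.2. Qed.

Lemma adjmx_trace : \tr A = 0.
Proof. by rewrite /mxtrace big1 // => i _; rewrite mxE (negbTE (simple_e.1 i)). Qed.

Let sum_adj : \sum_i \sum_j (e i j)%:R = (2 * num_edges e)%:R :> R.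
Proof. by rewrite -sum_adj_eq_twice_edges natr_sum; apply: eq_bigr => i _; rewrite natr_sum. Qed.

Lemma adjmx_trace_sqr : \tr (A *m A) = (2 * num_edges e)%:R.
Proof.
rewrite -sum_adj /mxtrace; apply: eq_bigr => i _; rewrite mxE.
by apply: eq_bigr => j _; rewrite !mxE (simple_e.2 j i); case: (e i j); rewrite ?mulr1 ?mulr0.
Qed.

Lemma adjmx_ones : (ones *m A *m ones^T) 0 0 = (2 * num_edges e)%:R.
Proof.
rewrite -sum_adj mxE; apply: eq_bigr => i _; rewrite !mxE mulr1.
by apply: eq_bigr => j _; rewrite !mxE mul1r simple_e.2.
Qed.

End SimpleGraph.

Theorem mainTheorem2 (R : realType) (n : nat) (e : rel 'I_n) (s : seq R) :
  simple_graph e ->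
  odd n ->
  (3 <= n.-1)%N ->
  (n.-1 <= num_edges e)%N ->
  is_spectrum (adjmx R e) s ->
  let m : R := (num_edges e)%:R in
  let nr : R := n%:R in
  huckel_energy n s <=
    (if m <= nr ^+ 2 * (nr - 3) ^+ 2 / (2 * (nr ^+ 2 - 4 * nr + 11))
     then 2 * m / (nr - 1)
          + Num.sqrt (2 * m * nr * (nr ^+ 2 - 3 * nr + 1) * (nr ^+ 2 - nr - 2 * m))
            / (nr * (nr - 1))
     else nr^-1 * Num.sqrt (2 * m * (2 * nr - 1) * (nr ^+ 2 - 2 * m))).
Proof.
move=> simple_e odd_n n_ge4 edges_ge [size_s [sorted_s char_s]]; cbv zeta.
set m := (num_edges e)%:R; set nr := n%:R.
set r := n./2; set t := nth 0 s.
have nE : n = (2 * r).+1 by rewrite -[LHS]odd_double_half odd_n -mul2n.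
have r2 : (2 <= r)%N by move: n_ge4; rewrite nE; lia.
have nrE : ((2 * r).+1)%:R = nr by rewrite /nr nE.
have nr1 : nr - 1 = (n.-1)%:R by rewrite -nrE nE -natr1 addrK.
have sum_t : \sum_(0 <= i < (2 * r).+1) t i = 0.
  by rewrite -nE -size_s -(big_nth 0 predT id) (sum_eigen (adjmx_sym simple_e R) char_s) adjmx_trace.
have sum_t2 : \sum_(0 <= i < (2 * r).+1) t i ^+ 2 = 2 * m.
  rewrite -nE -size_s -(big_nth 0 predT (fun x => x ^+ 2)).
  by rewrite (sum_eigen_sqr (adjmx_sym simple_e R) char_s) adjmx_trace_sqr // natrM.
have t0_ge : 2 * m <= nr * t 0%N.
  have := rayleigh_le (adjmx_sym simple_e R) char_s (sorted_ge_head sorted_s) (const_mx 1).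
  by rewrite adjmx_ones // dot_const_mx1 natrM [nr * _]mulrC.
have edges_lo : 2 * (nr - 1) <= 2 * m by rewrite nr1 ler_pM2l // ler_nat.
have edges_hi : 2 * m <= nr * (nr - 1).
  by rewrite nr1 /m /nr -!natrM ler_nat twice_edges_le.
have sparse : huckel_energy n s <= energy_bound_sparse nr (2 * m).
  have := huckel_sum_le_sparse r2 sum_t sum_t2; rewrite /= nrE big_mkord.
  by move/(_ edges_lo edges_hi t0_ge); rewrite /huckel_energy odd_n.
case: ifP => _ //.
apply: le_trans sparse (energy_bound_sparse_le_dense _ _ edges_hi).
  by rewrite -nrE (ler_nat R 3); lia.
by rewrite mulr_ge0 ?ler0n.
Qed.
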